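(* Let $G$ be a sufficiently large abelian group of order $n$ with $G\not\cong\mathbb{Z}_2^m$ and $G\not\cong\mathbb{Z}_2^m\times\mathbb{Z}_4$ (for any $m$). Then there are $n/100$ pairwise disjoint triples $\{x,y,z\}$ of distinct non-involutions of $G$ with $x+y+z=0$.
   Context: A non-involution is an element $x\in G$ with $x\neq -x$ (i.e. $2x\neq 0$). ''Sufficiently large'' means there is $n_0$ such that the statement holds for all such groups of order at least $n_0$. *)

From HB Require Import structures.
From mathcomp Require Import all_boot all_order all_algebra.
Set Implicit Arguments. Unset Strict Implicit. Unset Printing Implicit Defensive.
Import GRing.Theory.
Local Open Scope ring_scope.

Definition zmod_iso (G H : zmodType) : Prop :=
  exists f : G -> H, bijective f /\ {morph f : x y / x + y}.

Definition non_involution (G : zmodType) (x : G) : bool := x + x != 0.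

Definition Z2pow (m : nat) : zmodType := 'rV['Z_2]_m.
Definition Z2powZ4 (m : nat) : zmodType := ('rV['Z_2]_m * 'Z_4)%type.

Definition triple_elems (G : Type) (T : seq (G * G * G)) : seq G :=
  flatten [seq [:: t.1.1; t.1.2; t.2] | t <- T].

Definition zero_sum_triple_family (G : finZmodType) (T : seq (G * G * G)) : Prop :=
  uniq (triple_elems T) /\
  all (fun t : G * G * G =>
         [&& non_involution t.1.1, non_involution t.1.2, non_involution t.2
           & t.1.1 + t.1.2 + t.2 == 0]) T.

From HB Require Import structures.
From mathcomp Require Import all_boot all_order all_algebra all_fingroup all_solvable.
From mathcomp Require Import zify.
Set Implicit Arguments. Unset Strict Implicit. Unset Printing Implicit Defensive.
Import GRing.Theory FinRing.Theory.
Local Open Scope ring_scope.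

(* Let H = {x | 2x = 0} and D = 2G.  Doubling is a homomorphism with kernel H
   and image D, so |H| |D| = |G|.  If |D| <= 2, then either 2G = 0 and
   G = Z_2^m, or D = {0, 2g}: then g has order 4 = exp G, a complement of <g>
   has exponent 2, and G = Z_2^m x Z_4.  Hence |D| >= 3, so |H| <= |G|/3, and
   the triples {x, y, -(x+y)} can be chosen greedily while fewer than |G|/8
   elements are used: x avoids H and the used elements; y avoids H, -x + H,
   the used elements and their images under y |-> -(x+y), x, -2x, and the y
   with 2y = -x (those with y = -(x+y)).  The last set is a coset of H or
   empty; it is empty when |D| = 3 because x can then be taken outside D, and
   otherwise |H| <= |G|/4. *)

Lemma zmod_iso_sym (A B : zmodType) : zmod_iso A B -> zmod_iso B A.
Proof.
case=> f [[g fK gK] fD]; exists g; split; first by exists f.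
by move=> x y; apply: (can_inj fK); rewrite fD !gK.
Qed.

Lemma Z2_addrr (x : 'Z_2) : x + x = 0.
Proof. by rewrite -mulr2n -mulr_natr pchar_Zp ?mulr0. Qed.

Lemma rV_Z2_abelem m : (2.-abelem [set: 'rV['Z_2]_m])%g.
Proof.
apply/exponent2_abelem/exponentP => v _.
by apply/rowP => i; rewrite zmodXgE mulr2n !mxE Z2_addrr.
Qed.

Lemma abelem2_rV_embedding (G : finZmodType) (K : {group G}) :
  (2.-abelem K)%g ->
  exists m (f : 'rV['Z_2]_m -> G),
    [/\ injective f, {morph f : u v / u + v}, forall v, f v \in K
      & #|K| = (2 ^ m)%N].
Proof.
move=> abK; set m := logn 2 #|K|.
have cardK : #|K| = (2 ^ m)%N by rewrite /m -card_pgroup ?(abelem_pgroup abK).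
have : ([set: 'rV['Z_2]_m] \isog K)%g.
  rewrite (isog_abelem_card _ (rV_Z2_abelem m)) abK /=.
  by rewrite cardsT card_mx card_ord mul1n cardK.
case/isogP=> f /injmP f_inj f_im; exists m, f; split=> //.
- by move=> u v e; apply: f_inj; rewrite ?inE.
- by move=> u v; rewrite -zmodMgE morphM ?inE.
- by move=> v; rewrite -f_im mem_morphim ?inE.
Qed.

Lemma zmod_iso_Z2pow (G : finZmodType) :
  (forall x : G, x + x = 0) -> exists m, zmod_iso G (Z2pow m).
Proof.
move=> G2.
have abG : (2.-abelem [set: G])%g.
  by apply/exponent2_abelem/exponentP => x _; rewrite zmodXgE mulr2n G2.
have [m [f [f_inj fD _ cardG]]] := abelem2_rV_embedding abG.
exists m; apply: zmod_iso_sym; exists f; split=> //.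
by apply: inj_card_bij; rewrite // card_mx card_ord mul1n -cardG cardsT.
Qed.

Section CyclicFactorOfOrderFour.

Variables (G : finZmodType) (g : G).
Hypothesis g2_neq0 : g + g != 0.
Hypothesis doubles_g : forall x : G, x + x = 0 \/ x + x = g + g.

Lemma mulr4n_eq0 (x : G) : x *+ 4 = 0.
Proof.
have g4 : (g + g) + (g + g) = 0.
  case: (doubles_g (g + g)) => // /(congr1 (fun y => y - (g + g))).
  by rewrite addrK subrr => g2; move: g2_neq0; rewrite g2 eqxx.
by rewrite -[4%N]/(2 + 2)%N mulrnDr mulr2n; case: (doubles_g x) => ->; rewrite ?addr0.
Qed.

Lemma order_g : #[g]%g = 4%N.
Proof.
have : (#[g]%g %| 4)%N by rewrite order_dvdn zmodXgE mulr4n_eq0.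
have : ~~ (#[g]%g %| 2)%N by rewrite order_dvdn zmodXgE mulr2n.
rewrite (dvdn_divisors _ (isT : 0 < 4)%N) -topredE /=.
by case: #[g]%g => [|[|[|[|[|]]]]].
Qed.

Lemma exponent_g : exponent [set: G] = 4%N.
Proof.
apply/eqP; rewrite eqn_dvd -{2}order_g dvdn_exponent ?inE // andbT.
by apply/exponentP => x _; rewrite zmodXgE mulr4n_eq0.
Qed.

Lemma cycle_g_complement :
  exists K : {group G},
    [/\ <[g]> :&: K = 1, <[g]> * K = [set: G] & 2.-abelem K]%g.
Proof.
have [K /complP [tiK mulK]] := splitsP (abelian_splits (in_setT g)
  (etrans order_g (esym exponent_g)) (zmod_abelian _)).
exists K; split=> //; apply/exponent2_abelem/exponentP => k Kk.
rewrite zmodXgE mulr2n; case: (doubles_g k) => // k2.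
have : g + g \in (<[g]> :&: K)%g.
  by rewrite inE -mulr2n -zmodXgE mem_cycle zmodXgE mulr2n -k2 -zmodMgE groupM.
by rewrite tiK inE (negPf g2_neq0).
Qed.

Lemma zmod_iso_Z2powZ4 : exists m, zmod_iso G (Z2powZ4 m).
Proof.
have [K [tiK mulK abK]] := cycle_g_complement.
have [m [f [f_inj fD fK cardK]]] := abelem2_rV_embedding abK.
have f0 : f 0 = 0 by apply/(addrI (f 0)); rewrite -fD !addr0.
exists m; apply: zmod_iso_sym.
pose phi (p : Z2powZ4 m) : G := f p.1 + g *+ p.2.
have gmod i : g *+ (i %% 4) = g *+ i.
  by rewrite -!zmodXgE -order_g expg_mod_order.
have phiD : {morph phi : p q / p + q}.
  by move=> [v a] [w b]; rewrite /phi /= fD gmod mulrnDr addrACA.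
have phi_ker p : phi p = 0 -> p = 0.
  case: p => v a; rewrite /phi /= => /(canRL (addrK _)); rewrite add0r => fv.
  have : f v \in (<[g]> :&: K)%g.
    by rewrite inE fK andbT fv -zmodVgE groupV -zmodXgE mem_cycle.
  rewrite tiK inE => /eqP fv1; have v0 : v = 0 by apply: f_inj; rewrite f0.
  move: fv; rewrite v0 f0 => /eqP; rewrite eq_sym oppr_eq0 -zmodXgE -order_dvdn order_g.
  by case: a => [[|[|[|[|]]]] ?] //= _; congr (_, _); apply/val_inj.
exists phi; split=> //; apply: inj_card_bij.
  move=> p q e; apply/eqP; rewrite -subr_eq0; apply/eqP/phi_ker.
  by apply/(addIr (phi q)); rewrite -phiD subrK e add0r.
rewrite card_prod card_mx card_ord card_ord mul1n -cardK -cardsT -mulK.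
by rewrite TI_cardMg // mulnC -order_g.
Qed.

End CyclicFactorOfOrderFour.

Lemma leq_card_bigcup (T : finType) (s : seq {set T}) :
  (#|\bigcup_(A <- s) A| <= \sum_(A <- s) #|A|)%N.
Proof.
elim: s => [|A s IHs]; first by rewrite !big_nil cards0.
by rewrite !big_cons (leq_trans (leq_card_setU _ _).1) ?leq_add2l.
Qed.

Section GreedyTriples.

Variable G : finZmodType.

Definition two_torsion : {set G} := [set x | x + x == 0].
Definition doubles : {set G} := [set x + x | x : G].
Definition halves (t : G) : {set G} := [set y | y + y == t].

Lemma doublesN t : t \in doubles -> - t \in doubles.
Proof. by case/imsetP=> y _ ->; apply/imsetP; exists (- y); rewrite ?opprD. Qed.

Lemma card_halves t :
  #|halves t| = if t \in doubles then #|two_torsion| else 0%N.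
Proof.
case: ifPn => [/imsetP [y0 _ ->] | tD].
  rewrite -[RHS](card_preimset _ (addIr (- y0))); apply: eq_card => y.
  by rewrite !inE addrACA -opprD subr_eq0.
apply: eq_card0 => y; rewrite !inE.
by apply: contraNF tD => /eqP <-; apply/imsetP; exists y.
Qed.

Lemma card_two_torsion_doubles : (#|two_torsion| * #|doubles|)%N = #|G|.
Proof.
rewrite -[RHS]sum1_card (partition_big (fun x : G => x + x) (mem doubles)) => [|x _];
  last exact: imset_f.
rewrite mulnC -sum_nat_const; apply: eq_bigr => t tD.
have := card_halves t; rewrite tD => <-.
by rewrite -sum1_card; apply: eq_bigl => y; rewrite inE.
Qed.

Lemma exists_notin (B : {set G}) : (#|B| < #|G|)%N -> exists x, x \notin B.
Proof.
rewrite -(cardsC B) -addn1 leq_add2l => /card_gt0P [x].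
by rewrite inE; exists x.
Qed.

Section Fresh.

Variable U : {set G}.
Hypothesis doubles_ge3 : (3 <= #|doubles|)%N.
Hypothesis U_small : (8 * #|U| + 8 < #|G|)%N.

Lemma exists_first_summand :
  exists2 x, x \notin two_torsion :|: U &
    (4 * (2 * #|two_torsion| + #|halves (- x)|) <= 3 * #|G|)%N.
Proof.
have HD := card_two_torsion_doubles.
have cardHU := (leq_card_setU two_torsion U).1.
have [D4 | D_lt4] := leqP 4 #|doubles|.
  have H4 : (#|two_torsion| * 4 <= #|G|)%N by rewrite -HD leq_mul2l D4 orbT.
  have [x xHU] : exists x, x \notin two_torsion :|: U by apply: exists_notin; lia.
  by exists x => //; rewrite card_halves; case: ifP => _; lia.
have D3 : #|doubles| = 3 by lia.
have cardHUD := (leq_card_setU (two_torsion :|: U) doubles).1.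
have [x] : exists x, x \notin two_torsion :|: U :|: doubles.
  by apply: exists_notin; lia.
rewrite in_setU negb_or => /andP [xHU xD]; exists x => //.
have /negPf NxD : - x \notin doubles.
  by apply: contra xD => /doublesN; rewrite opprK.
by rewrite card_halves NxD; lia.
Qed.

Lemma fresh_zero_sum_triple :
  exists x y : G, let z := - (x + y) in
    [&& non_involution x, non_involution y, non_involution z,
        uniq [:: x; y; z] & all (fun a => a \notin U) [:: x; y; z]].
Proof.
have [x] := exists_first_summand; rewrite !inE negb_or => /andP [xH xU] bound.
pose B := \bigcup_(A <- [:: two_torsion; (fun y => x + y) @^-1: two_torsion;
  halves (- x); U; (fun y => - (x + y)) @^-1: U; [set x; - (x + x)]]) A.
have [y] : exists y, y \notin B.
  apply/exists_notin/(leq_ltn_trans (leq_card_bigcup _)).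
  have cardH : #|(fun y => x + y) @^-1: two_torsion| = #|two_torsion|.
    exact/card_preimset/addrI.
  have cardU : #|(fun y => - (x + y)) @^-1: U| = #|U|.
    by apply: card_preimset => y1 y2 /oppr_inj /addrI.
  rewrite !big_cons big_nil cardH cardU cards2.
  (* [set] unifies two elaborations of [#|U|] that [lia] sees as distinct atoms *)
  by move: bound U_small; set u := #|U|; case: (_ != _) => /=; lia.
rewrite /B !big_cons big_nil !inE !negb_or.
case/and5P=> yH xyH yhalf yU /and3P [zU /andP [yx yxx] _].
exists x, y; rewrite /non_involution /= !inE negb_or -opprD oppr_eq0.
rewrite xH yH xyH xU yU zU eq_sym yx /= !andbT.
rewrite -addr_eq0 addrA addrC addr_eq0 yxx /=.
by rewrite -addr_eq0 addrCA addrC addr_eq0 yhalf.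
Qed.

End Fresh.

Lemma size_triple_elems (T : seq (G * G * G)) :
  size (triple_elems T) = (3 * size T)%N.
Proof. by elim: T => //= t T IH; rewrite IH mulnS. Qed.

Lemma zero_sum_triple_family_of_size k :
  (3 <= #|doubles|)%N -> (24 * k <= #|G|)%N ->
  exists T : seq (G * G * G), zero_sum_triple_family T /\ size T = k.
Proof.
move=> D3; elim: k => [|k IHk] Gk; first by exists [::].
have /IHk [T [[uniqT allT] sizeT]] : (24 * k <= #|G|)%N by lia.
pose U := [set a in triple_elems T].
have /(fresh_zero_sum_triple D3) [x [y /and5P [xN yN zN uniq_xyz fresh_xyz]]] :
    (8 * #|U| + 8 < #|G|)%N.
  have : (#|U| <= 3 * k)%N by rewrite -sizeT -size_triple_elems cardsE card_size.
  lia.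
exists ((x, y, - (x + y)) :: T); split; last by rewrite /= sizeT.
split; last by rewrite /= allT xN yN zN subrr eqxx.
have -> : triple_elems ((x, y, - (x + y)) :: T)
          = [:: x; y; - (x + y)] ++ triple_elems T by [].
rewrite cat_uniq uniq_xyz uniqT has_sym -all_predC andbT.
by apply: sub_all fresh_xyz => a; rewrite inE.
Qed.

End GreedyTriples.

Lemma three_le_card_doubles (G : finZmodType) :
  (forall m, ~ zmod_iso G (Z2pow m)) -> (forall m, ~ zmod_iso G (Z2powZ4 m)) ->
  (3 <= #|doubles G|)%N.
Proof.
move=> notZ2 notZ2Z4.
have [G2 | /forallPn [g g2]] := boolP [forall x : G, x + x == 0].
  by have [m /notZ2] := zmod_iso_Z2pow (fun x => eqP (forallP G2 x)).
have [G4 | /forallPn [x]] := boolP [forall x : G, (x + x == 0) || (x + x == g + g)].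
  have doubles_g (y : G) : y + y = 0 \/ y + y = g + g.
    by case/orP: (forallP G4 y) => /eqP; [left | right].
  by have [m /notZ2Z4] := zmod_iso_Z2powZ4 g2 doubles_g.
rewrite negb_or => /andP [x2 x2g].
have sub3 : [set 0; g + g; x + x] \subset doubles G.
  apply/subsetP => t; rewrite !inE => /orP [/orP [] | ] /eqP ->; apply/imsetP;
  by [exists 0; rewrite ?addr0 | exists g | exists x].
apply: leq_trans (subset_leq_card sub3).
by rewrite setUC cardsU1 cards2 !inE negb_or x2 x2g eq_sym g2.
Qed.

Theorem lemma6p32 :
  exists n0 : nat, forall G : finZmodType,
    (n0 <= #|G|)%N ->
    (forall m : nat, ~ zmod_iso G (Z2pow m)) ->
    (forall m : nat, ~ zmod_iso G (Z2powZ4 m)) ->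
    exists T : seq (G * G * G),
      zero_sum_triple_family T /\ (#|G| <= 100 * size T)%N.
Proof.
exists 24%N => G G_ge24 notZ2 notZ2Z4.
have G24 : (24 * (#|G| %/ 24) <= #|G|)%N by rewrite mulnC leq_trunc_div.
have [T [famT sizeT]] :=
  zero_sum_triple_family_of_size (three_le_card_doubles notZ2 notZ2Z4) G24.
by exists T; split=> //; rewrite sizeT; lia.
Qed.
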